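(* Let $\mathcal{S}\subseteq\mathcal{S}^N$ be a closed set such that for every $\bm S\in\mathbb{R}^{N\times N}$ the Frobenius-norm projection $P_{\mathcal{S}}(\bm S):=\arg\min_{\hat{\bm S}\in\mathcal{S}}\Vert\bm S-\hat{\bm S}\Vert_{\rm F}$ is unique. Fix $\bm\Lambda_o\in\mathcal{D}_N$ with non-increasing diagonal entries and let $\mathcal{M}:=\{\bm V\bm\Lambda_o\bm V^T:\bm V\in{\rm O}(N)\}$. Let $\bm S_0\in\mathcal{M}$ and generate a sequence by the alternating projections method $$\bm S_{k+1/2}=P_{\mathcal{S}}(\bm S_k),\qquad \bm S_{k+1}\in P_{\mathcal{M}}(\bm S_{k+1/2}),$$ where for $\bm Y\in\mathcal{S}^N$, $P_{\mathcal{M}}(\bm Y)$ denotes the set of matrices $\bm Q\bm\Lambda_o\bm Q^T$ over all eigendecompositions $\bm Y=\bm Q\bm\Lambda\bm Q^T$ ($\bm Q\in{\rm O}(N)$) with non-increasing diagonal $\bm\Lambda$. Then there exists a limit point $\bm S$ of the sequence $(\bm S_k)$ which is a fixed point of this iteration and satisfies $$\Vert\bm S-P_{\mathcal{S}}(\bm S)\Vert=\lim_{k\to\infty}\Vert\bm S_k-P_{\mathcal{S}}(\bm S_k)\Vert .$$ Moreover, if this limit is zero, then $\bm S\in\mathcal{S}\cap\mathcal{M}$.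
   Context: $\mathcal{S}^N$ denotes the set of real symmetric $N\times N$ matrices, $\mathcal{D}_N$ the set of real $N\times N$ diagonal matrices, ${\rm O}(N)$ the set of $N\times N$ real orthogonal matrices. A diagonal matrix $\bm\Lambda$ has non-increasing diagonal entries if $[\bm\Lambda]_{ii}\ge[\bm\Lambda]_{jj}$ for $i<j$. Fixed point: a matrix $\bm S\in\mathcal{S}^N$ is a fixed point of the alternating projections iteration if there exists an eigendecomposition $P_{\mathcal{S}}(\bm S)=\bm Q\bm\Lambda\bm Q^T$ with $\bm Q\in{\rm O}(N)$ and non-increasing diagonal $\bm\Lambda$ such that $\bm S=\bm Q\bm\Lambda_o\bm Q^T$; equivalently $\bm S\in P_{\mathcal{M}}(P_{\mathcal{S}}(\bm S))$. *)

From Stdlib Require Import Reals.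
From mathcomp Require Import all_boot.

Set Implicit Arguments.
Unset Strict Implicit.

Local Open Scope R_scope.

Definition Mat (N : nat) := 'I_N -> 'I_N -> R.

Definition mmul {N : nat} (A B : Mat N) : Mat N :=
  fun i j => \big[Rplus/0]_(k < N) (A i k * B k j).

Definition mtr {N : nat} (A : Mat N) : Mat N := fun i j => A j i.

Definition msub {N : nat} (A B : Mat N) : Mat N := fun i j => A i j - B i j.

Definition idm (N : nat) : Mat N := fun i j => if i == j then 1 else 0.

Definition is_orthogonal {N : nat} (Q : Mat N) : Prop := mmul (mtr Q) Q = @idm N.

Definition is_symmetric {N : nat} (A : Mat N) : Prop := mtr A = A.

Definition is_diagonal {N : nat} (D : Mat N) : Prop :=
  forall i j : 'I_N, i <> j -> D i j = 0.

Definition nonincreasing {N : nat} (D : Mat N) : Prop :=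
  forall i j : 'I_N, (i < j)%N -> D j j <= D i i.

Definition frob {N : nat} (A : Mat N) : R :=
  sqrt (\big[Rplus/0]_(i < N) \big[Rplus/0]_(j < N) (A i j * A i j)).

Definition mdist {N : nat} (A B : Mat N) : R := frob (msub A B).

Definition mat_cv {N : nat} (u : nat -> Mat N) (L : Mat N) : Prop :=
  forall i j : 'I_N, Un_cv (fun k => u k i j) (L i j).

(* closed set (sequentially closed, equivalent in R^{N x N}) *)
Definition mat_closed {N : nat} (C : Mat N -> Prop) : Prop :=
  forall (u : nat -> Mat N) (L : Mat N),
    (forall k, C (u k)) -> mat_cv u L -> C L.

Definition is_proj {N : nat} (C : Mat N -> Prop) (X P : Mat N) : Prop :=
  C P /\ forall Y, C Y -> mdist X P <= mdist X Y.

Definition Mset {N : nat} (Lo : Mat N) (X : Mat N) : Prop :=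
  exists V, is_orthogonal V /\ X = mmul (mmul V Lo) (mtr V).

Definition in_PM {N : nat} (Lo : Mat N) (Y X : Mat N) : Prop :=
  exists Q L : Mat N, is_orthogonal Q /\ is_diagonal L /\ nonincreasing L /\
    Y = mmul (mmul Q L) (mtr Q) /\ X = mmul (mmul Q Lo) (mtr Q).

Definition mat_limit_point {N : nat} (u : nat -> Mat N) (L : Mat N) : Prop :=
  exists phi : nat -> nat, (forall k, (phi k < phi (Datatypes.S k))%nat) /\
    mat_cv (fun k => u (phi k)) L.

From Stdlib Require Import Reals Lra Lia FunctionalExtensionality ClassicalEpsilon.
From mathcomp Require Import all_boot ssralg matrix.
From mathcomp Require Import Rstruct.

(* Write d_k = ||S_k - S_{k+1/2}||, e_k = ||S_{k+1} - S_{k+1/2}||.  The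
   projection step onto C gives d_{k+1} <= e_k.  The eigen-step gives
   e_k <= d_k: for Y = Q L Q^T (L diagonal, non-increasing) the matrix
   Q Lo Q^T is a closest point of M to Y, because by the rearrangement
   inequality for the doubly stochastic matrix (W_ij^2), W = V^T Q, one has
   <V Lo V^T, Q L Q^T> <= <Lo, L>.  Hence (d_k) decreases to some dl.  The
   eigendecompositions (Q_k, L_k) of S_{k+1/2} are bounded, so a subsequence
   converges to (Q0, L0); along it S_{k+1} -> S = Q0 Lo Q0^T and
   S_{k+1/2} -> Y = Q0 L0 Q0^T in C, and squeezing e_k between d_{k+1} and d_k
   shows ||S - Y|| = dl <= ||S - Z|| for every Z in C.  So Y is a projection
   of S onto C, S is obtained from Y by the eigen-step, and S is the fixed
   point of the theorem. *)

Local Open Scope R_scope.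

Notation "\sR_ ( i < n ) F" := (\big[Rplus/0]_(i < n) F)
  (at level 41, F at level 41, i, n at level 50).

Lemma sumR_le (I : Type) (r : seq I) (P : pred I) (F G : I -> R) :
  (forall i, P i -> F i <= G i) ->
  \big[Rplus/0]_(i <- r | P i) F i <= \big[Rplus/0]_(i <- r | P i) G i.
Proof.
move=> H; apply: (big_ind2 (fun x y => x <= y)); first exact: Rle_refl.
- by move=> *; apply: Rplus_le_compat.
- exact: H.
Qed.

Lemma sumR_ge0 (I : Type) (r : seq I) (P : pred I) (F : I -> R) :
  (forall i, P i -> 0 <= F i) -> 0 <= \big[Rplus/0]_(i <- r | P i) F i.
Proof.
move=> H; apply: (big_ind (fun x => 0 <= x)); first exact: Rle_refl.
- by move=> *; apply: Rplus_le_le_0_compat.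
- exact: H.
Qed.

Lemma Rabs_sum (I : Type) (r : seq I) (P : pred I) (F : I -> R) :
  Rabs (\big[Rplus/0]_(i <- r | P i) F i) <= \big[Rplus/0]_(i <- r | P i) Rabs (F i).
Proof.
apply: (big_ind2 (fun x y => Rabs x <= y)).
- rewrite Rabs_R0; exact: Rle_refl.
- move=> x1 x2 y1 y2 H1 H2; apply: Rle_trans (Rabs_triang _ _) _; lra.
- move=> i _; exact: Rle_refl.
Qed.

Lemma sum_ge_term (I : finType) (F : I -> R) i : (forall j, 0 <= F j) ->
  F i <= \big[Rplus/0]_(j : I) F j.
Proof.
move=> H; rewrite (bigD1 i) //=.
have : 0 <= \big[Rplus/0]_(j | true && (j != i)) F j by apply: sumR_ge0 => j _.
simpl; lra.
Qed.

Lemma sum_split (F : nat -> R) m n : (m <= n)%N ->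
  \sR_(i < n) F i = \sR_(i < m) F i + \big[Rplus/0]_(m <= i < n) F i.
Proof.
move=> Hmn; rewrite -!(big_mkord xpredT).
exact: (@big_cat_nat _ _ _ m 0 n _ _ (leq0n m) Hmn).
Qed.
Arguments sum_split F {m n}.

Lemma sum_nat0 (F : nat -> R) m n :
  (forall i, (m <= i)%N -> F i = 0) -> \big[Rplus/0]_(m <= i < n) F i = 0.
Proof.
move=> H; rewrite big_nat_cond big1 // => i /andP[/andP[Hi _] _]; exact: H.
Qed.

Lemma sum_indicator (p n : nat) : (p < n)%N ->
  \sR_(j < n) (if (j <= p)%N then 1 else 0) = \sR_(i < p.+1) 1.
Proof.
move=> Hp; rewrite (sum_split (fun j : nat => if (j <= p)%N then 1 else 0) Hp).
rewrite [X in _ + X = _]sum_nat0 => [|i Hi]; last by rewrite leqNgt Hi.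
rewrite Rplus_0_r; apply: eq_bigr => i _; by rewrite -ltnS ltn_ord.
Qed.

Lemma sum_le_widen (F : nat -> R) m n : (m <= n)%N ->
  (forall i, (m <= i < n)%N -> 0 <= F i) ->
  \sR_(i < m) F i <= \sR_(i < n) F i.
Proof.
move=> Hmn H; rewrite (sum_split F Hmn).
have : 0 <= \big[Rplus/0]_(m <= i < n) F i.
  rewrite big_nat_cond; apply: sumR_ge0 => i /andP[Hi _]; exact: H.
lra.
Qed.
Arguments sum_le_widen F {m n}.

Lemma abel_summation (a c : nat -> R) n :
  \sR_(i < n) (a i * c i) =
  \sR_(p < n) ((a p - a p.+1) * \sR_(i < p.+1) c i) + a n * \sR_(i < n) c i.
Proof.
elim: n => [|n IH]; first by rewrite !big_ord0; ring.
rewrite big_ord_recr /= IH.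
rewrite [\big[Rplus/0]_(p < n.+1) _]big_ord_recr /=.
rewrite [\big[Rplus/0]_(i < n.+1) c i]big_ord_recr /=; ring.
Qed.

(** * Rearrangement inequality for doubly stochastic weights *)

Section Rearrangement.
Variables (n : nat) (P : nat -> nat -> R).
Hypothesis P_ge0 : forall i j, (i < n)%N -> (j < n)%N -> 0 <= P i j.
Hypothesis P_rows : forall i, (i < n)%N -> \sR_(j < n) P i j = 1.
Hypothesis P_cols : forall j, (j < n)%N -> \sR_(i < n) P i j = 1.

Lemma stochastic_partial_sum_le (b : nat -> R) (p : nat) :
  (forall q, b q.+1 <= b q) -> (p < n)%N ->
  \sR_(i < p.+1) \sR_(j < n) (P i j * b j) <= \sR_(i < p.+1) b i.
Proof.
move=> b_dec Hp.
set G := fun j => \sR_(i < p.+1) P i j.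
set ind := fun j : nat => if (j <= p)%N then 1 else 0.
have -> : \sR_(i < p.+1) \sR_(j < n) (P i j * b j) = \sR_(j < n) (b j * G j).
  rewrite exchange_big /=; apply: eq_bigr => j _.
  rewrite /G big_distrr /=; apply: eq_bigr => i _; ring.
have -> : \sR_(i < p.+1) b i = \sR_(j < n) (b j * ind j).
  rewrite (sum_split (fun j => b j * ind j) Hp).
  rewrite [X in _ = _ + X]sum_nat0 => [|i Hi]; last by rewrite /ind leqNgt Hi /=; ring.
  rewrite Rplus_0_r; apply: eq_bigr => i _; rewrite /ind -ltnS ltn_ord; ring.
have sumG : \sR_(j < n) G j = \sR_(i < p.+1) 1.
  rewrite /G exchange_big /=; apply: eq_bigr => i _; apply: P_rows.
  exact: leq_trans (ltn_ord i) Hp.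
have G_ge0 : forall j, (j < n)%N -> 0 <= G j.
  move=> j Hj; apply: sumR_ge0 => i _; apply: P_ge0 => //.
  exact: leq_trans (ltn_ord i) Hp.
have G_le1 : forall j, (j < n)%N -> G j <= 1.
  move=> j Hj; rewrite -(P_cols j Hj) /G.
  apply: (sum_le_widen (fun i => P i j)) => // i /andP[_ Hi]; exact: P_ge0.
rewrite (abel_summation b G) (abel_summation b ind) sumG /ind sum_indicator //.
apply: Rplus_le_compat_r; apply: sumR_le => q _.
apply: Rmult_le_compat_l; first by have := b_dec q; lra.
case: (leqP q p) => Hqp.
- apply: sumR_le => j _.
  have -> : (j <= p)%N by apply: leq_trans Hqp; rewrite -ltnS ltn_ord.
  apply: G_le1; apply: leq_ltn_trans (ltn_ord q); by rewrite -ltnS ltn_ord.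
- rewrite (@sum_indicator p q.+1 (leqW Hqp)) -sumG.
  apply: (sum_le_widen G) => // i /andP[_ Hi]; exact: G_ge0.
Qed.

Lemma rearrangement (a b : nat -> R) :
  (forall q, a q.+1 <= a q) -> (forall q, b q.+1 <= b q) ->
  \sR_(i < n) (a i * \sR_(j < n) (P i j * b j)) <= \sR_(i < n) (a i * b i).
Proof.
move=> a_dec b_dec.
rewrite (abel_summation a (fun i => \sR_(j < n) (P i j * b j))) (abel_summation a b).
have -> : \sR_(i < n) \sR_(j < n) (P i j * b j) = \sR_(i < n) b i.
  rewrite exchange_big /=; apply: eq_bigr => j _.
  rewrite -big_distrl /= P_cols //; ring.
apply: Rplus_le_compat_r; apply: sumR_le => p _.
apply: Rmult_le_compat_l; first by have := a_dec p; lra.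
exact: stochastic_partial_sum_le.
Qed.
End Rearrangement.

(* The diagonal of a matrix on 'I_n.+1, extended constantly to all of nat. *)
Definition diag_seq {n} (D : Mat n.+1) (k : nat) : R :=
  D (inord (minn k n)) (inord (minn k n)).

Lemma diag_seqE n (D : Mat n.+1) (i : 'I_n.+1) : diag_seq D i = D i i.
Proof.
rewrite /diag_seq; have -> : minn i n = i by apply/minn_idPl; apply: leq_ord.
by rewrite inord_val.
Qed.

Lemma diag_seq_dec n (D : Mat n.+1) : nonincreasing D ->
  forall q, diag_seq D q.+1 <= diag_seq D q.
Proof.
move=> HD q; rewrite /diag_seq; case: (leqP n q) => Hq.
- have -> : minn q.+1 n = n by apply/minn_idPr; apply: leqW.
  exact: Rle_refl.
- have -> : minn q.+1 n = q.+1 by apply/minn_idPl.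
  apply: HD; rewrite !inordK //; exact: ltnW.
Qed.

(** * Matrix algebra through MathComp matrices *)

Definition tomx {N} (A : Mat N) : 'M[R]_N := \matrix_(i, j) A i j.

Lemma tomx_inj {N} (A B : Mat N) : tomx A = tomx B -> A = B.
Proof.
move=> H; apply: functional_extensionality => i;
  apply: functional_extensionality => j.
by have := congr1 (fun M : 'M[R]_N => M i j) H; rewrite !mxE.
Qed.

Lemma tomx_mul {N} (A B : Mat N) : tomx (mmul A B) = (tomx A *m tomx B)%R.
Proof. apply/matrixP => i j; rewrite !mxE; apply: eq_bigr => k _; by rewrite !mxE. Qed.

Lemma tomx_tr {N} (A : Mat N) : tomx (mtr A) = ((tomx A)^T)%R.
Proof. by apply/matrixP => i j; rewrite !mxE. Qed.

Lemma tomx_id N : tomx (@idm N) = (1%:M)%R.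
Proof. apply/matrixP => i j; rewrite !mxE /idm; by case: (i == j). Qed.

Lemma mmulA {N} (A B C : Mat N) : mmul (mmul A B) C = mmul A (mmul B C).
Proof. apply: tomx_inj; rewrite !tomx_mul; symmetry; apply: mulmxA. Qed.

Lemma mtr_mul {N} (A B : Mat N) : mtr (mmul A B) = mmul (mtr B) (mtr A).
Proof.
apply: tomx_inj.
rewrite (@tomx_tr _ (mmul A B)) !tomx_mul (@tomx_tr _ A) (@tomx_tr _ B); apply: trmx_mul.
Qed.

Lemma mmul1 {N} (A : Mat N) : mmul (@idm N) A = A.
Proof. apply: tomx_inj; rewrite tomx_mul tomx_id; apply: mul1mx. Qed.

Lemma mmulr1 {N} (A : Mat N) : mmul A (@idm N) = A.
Proof. apply: tomx_inj; rewrite tomx_mul tomx_id; apply: mulmx1. Qed.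

(* A left inverse of a square matrix is a right inverse. *)
Lemma orth_r {N} {Q : Mat N} : is_orthogonal Q -> mmul Q (mtr Q) = @idm N.
Proof.
move=> /(congr1 tomx); rewrite tomx_mul tomx_id => H.
apply: tomx_inj; rewrite tomx_mul tomx_id; exact: mulmx1C.
Qed.

Lemma orth_tr_mul {N} (V Q : Mat N) :
  is_orthogonal V -> is_orthogonal Q -> is_orthogonal (mmul (mtr V) Q).
Proof.
move=> HV HQ; rewrite /is_orthogonal mtr_mul; change (mtr (mtr V)) with V.
rewrite mmulA -(mmulA V) (orth_r HV) mmul1.
exact: HQ.
Qed.

Definition ip {N} (A B : Mat N) : R := \sR_(i < N) \sR_(j < N) (A i j * B i j).

Lemma ip_tr {N} (A B : Mat N) : ip A B = (\tr ((tomx A)^T *m tomx B))%R.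
Proof.
rewrite /ip /mxtrace exchange_big; apply: eq_bigr => j _.
rewrite !mxE; apply: eq_bigr => i _; by rewrite !mxE.
Qed.

Lemma ip_conj {N} (V A Q B : Mat N) :
  ip (mmul (mmul V A) (mtr V)) (mmul (mmul Q B) (mtr Q)) =
  ip A (mmul (mmul (mmul (mtr V) Q) B) (mtr (mmul (mtr V) Q))).
Proof.
rewrite !ip_tr !tomx_mul (@tomx_tr _ (mmul (mtr V) Q)) tomx_mul (@tomx_tr _ V) (@tomx_tr _ Q).
by rewrite !trmx_mul !trmxK -!mulmxA [in LHS]mxtrace_mulC !mulmxA.
Qed.

Lemma ip_conj_self {N} (V A B : Mat N) : is_orthogonal V ->
  ip (mmul (mmul V A) (mtr V)) (mmul (mmul V B) (mtr V)) = ip A B.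
Proof.
move=> HV; rewrite ip_conj HV mmul1.
have -> : mtr (@idm N) = @idm N.
  apply: functional_extensionality => i; apply: functional_extensionality => j.
  by rewrite /mtr /idm eq_sym.
by rewrite mmulr1.
Qed.

Lemma ip_subl {N} (X Y Z : Mat N) : ip (msub X Y) Z = ip X Z - ip Y Z.
Proof.
have sumRN (I : Type) (r : seq I) (F : I -> R) :
    \big[Rplus/0]_(i <- r) (- F i) = - \big[Rplus/0]_(i <- r) F i.
  by rewrite (big_morph Ropp Ropp_plus_distr Ropp_0).
rewrite /ip /Rminus -sumRN -big_split; apply: eq_bigr => i _.
rewrite -sumRN -big_split; apply: eq_bigr => j _; rewrite /msub /=; ring.
Qed.

Lemma ip_sym {N} (A B : Mat N) : ip A B = ip B A.
Proof. apply: eq_bigr => i _; apply: eq_bigr => j _; ring. Qed.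

Lemma ip_sub {N} (X Y : Mat N) :
  ip (msub X Y) (msub X Y) = ip X X + ip Y Y - 2 * ip X Y.
Proof.
rewrite !ip_subl ![ip _ (msub _ _)]ip_sym !ip_subl (ip_sym Y X); ring.
Qed.

Lemma ip_diag {N} (D M : Mat N) : is_diagonal D ->
  ip D M = \sR_(i < N) (D i i * M i i).
Proof.
move=> HD; apply: eq_bigr => i _.
rewrite (bigD1 i) //= big1 => [|j Hj]; first ring.
rewrite HD; first ring.
by move=> E; rewrite E eqxx in Hj.
Qed.

Lemma conj_diag {N} (W L : Mat N) i : is_diagonal L ->
  mmul (mmul W L) (mtr W) i i = \sR_(j < N) (W i j * W i j * L j j).
Proof.
move=> HL; apply: eq_bigr => j _.
rewrite /mmul (bigD1 j) //= big1 => [|k Hk]; last first.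
  rewrite HL; first ring.
  by move=> E; rewrite E eqxx in Hk.
rewrite /mtr; ring.
Qed.

(* The squares of the entries of an orthogonal matrix form a doubly
   stochastic matrix. *)
Lemma orth_row_sum {N} {W : Mat N} i : is_orthogonal W ->
  \sR_(j < N) (W i j * W i j) = 1.
Proof.
move=> /orth_r /(congr1 (fun M : Mat N => M i i)); rewrite /idm eqxx => <-.
by apply: eq_bigr.
Qed.

Lemma orth_col_sum {N} {W : Mat N} j : is_orthogonal W ->
  \sR_(i < N) (W i j * W i j) = 1.
Proof.
move=> /(congr1 (fun M : Mat N => M j j)); rewrite /idm eqxx => <-.
by apply: eq_bigr.
Qed.

(* <Lo, W L W^T> <= <Lo, L> for orthogonal W and diagonal Lo, L sorted in
   the same order: the diagonal of W L W^T is (W_ij^2) applied to diag L. *)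
Lemma orth_conj_diag_le {N} (W Lo L : Mat N) :
  is_orthogonal W -> is_diagonal Lo -> nonincreasing Lo ->
  is_diagonal L -> nonincreasing L ->
  ip Lo (mmul (mmul W L) (mtr W)) <= ip Lo L.
Proof.
move=> HW HLo HLon HL HLn; rewrite !ip_diag //.
under eq_bigr => i _ do rewrite conj_diag //.
case: N W Lo L HW HLo HLon HL HLn => [|n] W Lo L HW HLo HLon HL HLn.
  rewrite !big_ord0; exact: Rle_refl.
pose P (i j : nat) := W (inord i) (inord j) * W (inord i) (inord j).
have E1 : \sR_(i < n.+1) (Lo i i * \sR_(j < n.+1) (W i j * W i j * L j j)) =
          \sR_(i < n.+1) (diag_seq Lo i * \sR_(j < n.+1) (P i j * diag_seq L j)).
  apply: eq_bigr => i _; rewrite diag_seqE; congr (_ * _).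
  by apply: eq_bigr => j _; rewrite diag_seqE /P !inord_val.
have E2 : \sR_(i < n.+1) (Lo i i * L i i) =
          \sR_(i < n.+1) (diag_seq Lo i * diag_seq L i).
  by apply: eq_bigr => i _; rewrite !diag_seqE.
rewrite E1 E2; apply: rearrangement; try exact: diag_seq_dec.
- move=> i j _ _; rewrite /P; nra.
- move=> i _; rewrite -(orth_row_sum (inord i) HW).
  by apply: eq_bigr => j _; rewrite /P inord_val.
- move=> j _; rewrite -(orth_col_sum (inord j) HW).
  by apply: eq_bigr => i _; rewrite /P inord_val.
Qed.

Lemma von_neumann {N} {V Q Lo L : Mat N} :
  is_orthogonal V -> is_orthogonal Q -> is_diagonal Lo -> nonincreasing Lo ->
  is_diagonal L -> nonincreasing L ->
  ip (mmul (mmul V Lo) (mtr V)) (mmul (mmul Q L) (mtr Q)) <= ip Lo L.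
Proof.
move=> HV HQ *; rewrite ip_conj; apply: orth_conj_diag_le => //.
exact: orth_tr_mul.
Qed.

Lemma eig_step_optimal {N} (V Q Lo L : Mat N) :
  is_orthogonal V -> is_orthogonal Q -> is_diagonal Lo -> nonincreasing Lo ->
  is_diagonal L -> nonincreasing L ->
  mdist (mmul (mmul Q Lo) (mtr Q)) (mmul (mmul Q L) (mtr Q)) <=
  mdist (mmul (mmul V Lo) (mtr V)) (mmul (mmul Q L) (mtr Q)).
Proof.
move=> HV HQ HLo HLon HL HLn.
rewrite /mdist /frob -/(ip _ _) -/(ip _ _); apply: sqrt_le_1_alt.
rewrite !ip_sub !ip_conj_self //.
have := von_neumann HV HQ HLo HLon HL HLn; lra.
Qed.

Lemma entry_le_frob {N} (A : Mat N) i j : Rabs (A i j) <= frob A.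
Proof.
rewrite /frob -sqrt_Rsqr_abs; apply: sqrt_le_1_alt; rewrite /Rsqr.
apply: Rle_trans (@sum_ge_term _ (fun b => A i b * A i b) j _) _ => [b|]; first nra.
apply: (@sum_ge_term _ (fun a => \sR_(b < N) (A a b * A a b)) i) => a.
apply: sumR_ge0 => b _; nra.
Qed.

Lemma mdist_ge0 {N} (A B : Mat N) : 0 <= mdist A B.
Proof. exact: sqrt_pos. Qed.

Lemma mdist0_eq {N} (A B : Mat N) : mdist A B = 0 -> A = B.
Proof.
move=> H0; apply: functional_extensionality => i; apply: functional_extensionality => j.
have := entry_le_frob (msub A B) i j; rewrite -/(mdist A B) H0 /msub => H.
have := Rle_abs (A i j - B i j); have := Rle_abs (- (A i j - B i j)).
rewrite Rabs_Ropp; lra.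
Qed.

Lemma orth_entry {N} {Q : Mat N} a b : is_orthogonal Q -> Rabs (Q a b) <= 1.
Proof.
move=> /(orth_col_sum b) H1.
have := @sum_ge_term _ (fun c => Q c b * Q c b) a (fun c => ltac:(nra)).
rewrite H1 /= => H2; apply: Rabs_le; nra.
Qed.

Lemma conj_entry_bound {N} (U X W : Mat N) i j :
  (forall a b, Rabs (U a b) <= 1) -> (forall a b, Rabs (W a b) <= 1) ->
  Rabs (mmul (mmul U X) W i j) <= \sR_(a < N) \sR_(b < N) Rabs (X a b).
Proof.
move=> HU HW; rewrite /mmul.
apply: Rle_trans (Rabs_sum _ _ _ _) _.
rewrite [X in _ <= X]exchange_big; apply: sumR_le => b _.
rewrite Rabs_mult.
apply: Rle_trans (Rmult_le_compat_l _ _ _ (Rabs_pos _) (HW b j)) _.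
rewrite Rmult_1_r; apply: Rle_trans (Rabs_sum _ _ _ _) _.
apply: sumR_le => a _; rewrite Rabs_mult.
have := HU i a; have := Rabs_pos (X a b); have := Rabs_pos (U i a); nra.
Qed.

Lemma orth_conj_entry_bound {N} (Q X : Mat N) i j : is_orthogonal Q ->
  Rabs (mmul (mmul Q X) (mtr Q) i j) <= \sR_(a < N) \sR_(b < N) Rabs (X a b).
Proof.
by move=> HQ; apply: conj_entry_bound => a b; [exact: orth_entry | exact: (orth_entry b a HQ)].
Qed.

(** * Subsequences and sequential compactness *)

Definition strict_incr (phi : nat -> nat) : Prop :=
  forall k, (phi k < phi (Datatypes.S k))%nat.

Lemma strict_incr_ge {phi} : strict_incr phi -> forall k, (k <= phi k)%nat.
Proof. move=> H; elim=> [|k IH] //; exact: leq_ltn_trans IH (H k). Qed.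

Lemma strict_incr_comp phi psi :
  strict_incr phi -> strict_incr psi -> strict_incr (fun k => phi (psi k)).
Proof.
move=> Hphi Hpsi k.
have mono : forall a b, (a < b)%nat -> (phi a < phi b)%nat.
  move=> a; elim=> [|b IH] //; rewrite ltnS leq_eqVlt => /orP[/eqP->|Hab].
    exact: Hphi.
  exact: ltn_trans (IH Hab) (Hphi b).
exact: mono.
Qed.

Lemma cv_subseq {u l phi} : strict_incr phi -> Un_cv u l -> Un_cv (fun k => u (phi k)) l.
Proof.
move=> Hphi Hu eps Heps; have [M HM] := Hu eps Heps; exists M => n Hn.
apply: HM; have := strict_incr_ge Hphi n; move/leP; lia.
Qed.

Lemma cv_const c : Un_cv (fun _ => c) c.
Proof. move=> eps Heps; exists 0%nat => n _; rewrite /R_dist Rminus_diag Rabs_R0; lra. Qed.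

Lemma bw_real (u : nat -> R) B : (forall k, Rabs (u k) <= B) ->
  exists phi l, strict_incr phi /\ Un_cv (fun k => u (phi k)) l.
Proof.
move=> HB.
have [l Hl] : exists l, ValAdh u l.
  apply: (@Bolzano_Weierstrass u (fun c => -B <= c <= B) (compact_P3 (-B) B)) => k.
  have := Rle_abs (u k); have := Rle_abs (- u k); rewrite Rabs_Ropp; have := HB k; lra.
have [g Hg] : exists g : nat -> nat -> nat, forall k m,
    (m <= g k m)%coq_nat /\ Rabs (u (g k m) - l) < / (INR k + 1).
  apply: (ClassicalEpsilon.choice (fun k gk => forall m,
    (m <= gk m)%coq_nat /\ Rabs (u (gk m) - l) < / (INR k + 1))) => k.
  apply: (ClassicalEpsilon.choice (fun m p =>
    (m <= p)%coq_nat /\ Rabs (u p - l) < / (INR k + 1))) => m.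
  have Hpos : 0 < / (INR k + 1) by apply: Rinv_0_lt_compat; have := pos_INR k; lra.
  apply: (Hl (fun x => Rabs (x - l) < / (INR k + 1))).
  by exists (mkposreal _ Hpos) => y Hy.
pose phi := fix f k := match k with
  | 0%nat => g 0%nat 0%nat
  | Datatypes.S k' => g k (Datatypes.S (f k')) end.
have Hphi : forall k, Rabs (u (phi k) - l) < / (INR k + 1).
  by case=> [|k]; apply: (proj2 (Hg _ _)).
exists phi, l; split.
  move=> k /=; have [H1 _] := Hg (Datatypes.S k) (Datatypes.S (phi k)); apply/ltP; lia.
move=> eps Heps; have [M [HM1 HM2]] := archimed_cor1 eps Heps.
exists M => n Hn; rewrite /R_dist.
apply: Rlt_le_trans (Hphi n) _; apply: Rle_trans (Rlt_le _ _ HM1).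
apply: Rinv_le_contravar; first exact: lt_0_INR.
have := le_INR _ _ Hn; lra.
Qed.

(* Bolzano-Weierstrass for a bounded family of sequences indexed by a
   finite type, by extracting one subsequence per index. *)
Lemma bw_finite (I : finType) (u : nat -> I -> R) B : (forall k i, Rabs (u k i) <= B) ->
  exists phi l, strict_incr phi /\ forall i, Un_cv (fun k => u (phi k) i) (l i).
Proof.
move=> HB.
suff : forall s : seq I, exists phi (l : I -> R), strict_incr phi /\
    forall i, i \in s -> Un_cv (fun k => u (phi k) i) (l i).
  move=> /(_ (enum I)) [phi [l [H1 H2]]]; exists phi, l; split => // i.
  apply: H2; by rewrite mem_enum.
elim=> [|x s [phi [l [Hphi Hl]]]].
  exists id, (fun _ => 0); split => // k; exact: ltnSn.
have [psi [lx [Hpsi Hx]]] := @bw_real _ _ (fun k => HB (phi k) x).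
exists (fun k => phi (psi k)), (fun i => if i == x then lx else l i); split.
  exact: strict_incr_comp.
move=> i; rewrite in_cons; case: eqP => [-> _|Hix /= Hi]; first exact: Hx.
exact: (@cv_subseq (fun k => u (phi k) i) _ _ Hpsi (Hl i Hi)).
Qed.

Lemma bw_mat {N} (A : nat -> Mat N) B : (forall k i j, Rabs (A k i j) <= B) ->
  exists phi L, strict_incr phi /\ mat_cv (fun k => A (phi k)) L.
Proof.
move=> HB.
have [phi [l [Hphi Hl]]] := @bw_finite _ (fun k (ij : 'I_N * 'I_N) => A k ij.1 ij.2) B
  (fun k ij => HB k ij.1 ij.2).
by exists phi, (fun i j => l (i, j)); split => // i j; apply: (Hl (i, j)).
Qed.

Lemma mat_cv_subseq {N} (A : nat -> Mat N) L phi : strict_incr phi -> mat_cv A L ->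
  mat_cv (fun k => A (phi k)) L.
Proof. move=> Hphi H i j; exact: (@cv_subseq (fun k => A k i j) _ _ Hphi (H i j)). Qed.

Lemma cv_sum (I : Type) (r : seq I) (F : nat -> I -> R) (G : I -> R) :
  (forall i, Un_cv (fun k => F k i) (G i)) ->
  Un_cv (fun k => \big[Rplus/0]_(i <- r) F k i) (\big[Rplus/0]_(i <- r) G i).
Proof.
move=> H; elim: r => [|x r IH].
  rewrite big_nil; apply: (Un_cv_ext (fun _ => 0)); last exact: cv_const.
  by move=> k; rewrite big_nil.
rewrite big_cons; apply: (Un_cv_ext (fun k => F k x + \big[Rplus/0]_(i <- r) F k i)).
  by move=> k; rewrite big_cons.
exact: CV_plus.
Qed.

Lemma mmul_cv {N} {A B : nat -> Mat N} {A0 B0 : Mat N} :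
  mat_cv A A0 -> mat_cv B B0 -> mat_cv (fun k => mmul (A k) (B k)) (mmul A0 B0).
Proof. move=> HA HB i j; apply: cv_sum => k; exact: CV_mult. Qed.

Lemma conj_cv {N} {Q L : nat -> Mat N} {Q0 L0 : Mat N} :
  mat_cv Q Q0 -> mat_cv L L0 ->
  mat_cv (fun k => mmul (mmul (Q k) (L k)) (mtr (Q k))) (mmul (mmul Q0 L0) (mtr Q0)).
Proof.
move=> HQ HL; apply: mmul_cv; first exact: mmul_cv.
move=> i j; exact: HQ.
Qed.

Lemma mdist_cv {N} {A B : nat -> Mat N} {A0 B0 : Mat N} :
  mat_cv A A0 -> mat_cv B B0 -> Un_cv (fun k => mdist (A k) (B k)) (mdist A0 B0).
Proof.
move=> HA HB; apply: continuity_seq.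
  apply: continuity_pt_sqrt; apply: sumR_ge0 => i _; apply: sumR_ge0 => j _; nra.
apply: cv_sum => i; apply: cv_sum => j; apply: CV_mult; exact: CV_minus.
Qed.

Lemma orthogonal_limit {N} {Q : nat -> Mat N} {Q0} :
  (forall k, is_orthogonal (Q k)) -> mat_cv Q Q0 -> is_orthogonal Q0.
Proof.
move=> HQ HQc; apply: functional_extensionality => i; apply: functional_extensionality => j.
have Hc := @mmul_cv _ (fun k => mtr (Q k)) _ _ _ (fun i j => HQc j i) HQc.
apply: UL_sequence (Hc i j) _.
apply: (Un_cv_ext (fun _ => @idm N i j)); last exact: cv_const.
by move=> k; rewrite (HQ k).
Qed.

Lemma diagonal_limit {N} {L : nat -> Mat N} {L0} :
  (forall k, is_diagonal (L k)) -> mat_cv L L0 -> is_diagonal L0.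
Proof.
move=> HL HLc i j Hij; apply: (UL_sequence _ _ _ (HLc i j)).
apply: (Un_cv_ext (fun _ => 0)); last exact: cv_const.
by move=> k; rewrite (HL k i j Hij).
Qed.

Lemma nonincreasing_limit {N} {L : nat -> Mat N} {L0} :
  (forall k, nonincreasing (L k)) -> mat_cv L L0 -> nonincreasing L0.
Proof.
move=> HL HLc i j Hij; exact: (Rle_cv_lim (fun k => HL k i j Hij) (HLc j j) (HLc i i)).
Qed.

(** * The alternating projections iteration *)

Section AlternatingProjections.
Variables (N : nat) (C : Mat N -> Prop) (Lo : Mat N) (Sk Shalf Qf Lf : nat -> Mat N).
Hypothesis HCclosed : mat_closed C.
Hypothesis HLo_diag : is_diagonal Lo.
Hypothesis HLo_noninc : nonincreasing Lo.
Hypothesis HS0 : Mset Lo (Sk 0%nat).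
Hypothesis Hhalf : forall k, is_proj C (Sk k) (Shalf k).
Hypothesis HQo : forall k, is_orthogonal (Qf k).
Hypothesis HLd : forall k, is_diagonal (Lf k).
Hypothesis HLn : forall k, nonincreasing (Lf k).
Hypothesis HY : forall k, Shalf k = mmul (mmul (Qf k) (Lf k)) (mtr (Qf k)).
Hypothesis HS : forall k, Sk k.+1 = mmul (mmul (Qf k) Lo) (mtr (Qf k)).

Let d k := mdist (Sk k) (Shalf k).
Let e k := mdist (Sk k.+1) (Shalf k).

Lemma iterates_in_M k : Mset Lo (Sk k).
Proof. by case: k => [|k] //; exists (Qf k). Qed.

Lemma proj_step k : d k.+1 <= e k.
Proof. exact: (proj2 (Hhalf k.+1) _ (proj1 (Hhalf k))). Qed.

Lemma eig_step k : e k <= d k.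
Proof.
rewrite /e /d HS HY; have [V [HV ->]] := iterates_in_M k.
exact: eig_step_optimal.
Qed.

Lemma dist_decreasing : Un_decreasing d.
Proof. move=> k; exact: Rle_trans (proj_step k) (eig_step k). Qed.

Lemma dist_cv : exists dl, Un_cv d dl.
Proof.
have lb : has_lb d.
  by exists 0 => x [i ->]; rewrite /opp_seq /d; have := mdist_ge0 (Sk i) (Shalf i); lra.
by have [dl Hdl] := decreasing_cv d dist_decreasing lb; exists dl.
Qed.

(* S_{k+1/2} stays within d_0 of the bounded set M. *)
Lemma half_bounded : exists B, forall k a b, Rabs (Shalf k a b) <= B.
Proof.
exists (\sR_(a < N) \sR_(b < N) Rabs (Lo a b) + d 0%nat) => k a b.
have -> : Shalf k a b = Sk k a b + (Shalf k a b - Sk k a b) by ring.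
apply: Rle_trans (Rabs_triang _ _) _; apply: Rplus_le_compat.
  have [V [HV ->]] := iterates_in_M k; exact: orth_conj_entry_bound.
have d_le : d k <= d 0%nat.
  elim: k => [|k IH]; [exact: Rle_refl | exact: Rle_trans (dist_decreasing k) IH].
apply: Rle_trans d_le; rewrite Rabs_minus_sym; exact: (entry_le_frob (msub _ _)).
Qed.

(* L_k = Q_k^T S_{k+1/2} Q_k is bounded as well. *)
Lemma eigvals_bounded : exists B, forall k a b, Rabs (Lf k a b) <= B.
Proof.
have [B HB] := half_bounded.
exists (\sR_(a < N) \sR_(b < N) B) => k a b.
have -> : Lf k = mmul (mmul (mtr (Qf k)) (Shalf k)) (Qf k).
  by rewrite HY -!mmulA (HQo k) mmul1 mmulA (HQo k) mmulr1.
apply: (Rle_trans _ (\sR_(a' < N) \sR_(b' < N) Rabs (Shalf k a' b'))).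
  by apply: conj_entry_bound => a' b'; [exact: (orth_entry b' a' (HQo k)) | exact: orth_entry].
apply: sumR_le => a' _; apply: sumR_le => b' _; exact: HB.
Qed.

Lemma eig_subseq : exists psi Q0 L0, strict_incr psi /\
  mat_cv (fun k => Qf (psi k)) Q0 /\ mat_cv (fun k => Lf (psi k)) L0.
Proof.
have [phi [Q0 [Hphi HQc]]] := @bw_mat _ Qf 1 (fun k a b => orth_entry a b (HQo k)).
have [B HB] := eigvals_bounded.
have [chi [L0 [Hchi HLc]]] := @bw_mat _ (fun k => Lf (phi k)) B (fun k => HB (phi k)).
exists (fun k => phi (chi k)), Q0, L0; split; first exact: strict_incr_comp.
by split => //; apply: (@mat_cv_subseq _ (fun k => Qf (phi k))).
Qed.

Lemma iterates_subseq_cv {psi Q0} : mat_cv (fun k => Qf (psi k)) Q0 ->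
  mat_cv (fun k => Sk (psi k).+1) (mmul (mmul Q0 Lo) (mtr Q0)).
Proof.
move=> HQc i j; apply: (Un_cv_ext (fun k => mmul (mmul (Qf (psi k)) Lo) (mtr (Qf (psi k))) i j)).
  by move=> k; rewrite HS.
by apply: conj_cv => // ? ?; apply: cv_const.
Qed.

Lemma halves_subseq_cv {psi Q0 L0} : mat_cv (fun k => Qf (psi k)) Q0 ->
  mat_cv (fun k => Lf (psi k)) L0 ->
  mat_cv (fun k => Shalf (psi k)) (mmul (mmul Q0 L0) (mtr Q0)).
Proof.
move=> HQc HLc i j; apply: (Un_cv_ext (fun k =>
  mmul (mmul (Qf (psi k)) (Lf (psi k))) (mtr (Qf (psi k))) i j)); first by move=> k; rewrite HY.
exact: conj_cv.
Qed.

Lemma subseq_limit_proj {psi Q0 L0 dl} :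
  strict_incr psi -> mat_cv (fun k => Qf (psi k)) Q0 ->
  mat_cv (fun k => Lf (psi k)) L0 -> Un_cv d dl ->
  is_proj C (mmul (mmul Q0 Lo) (mtr Q0)) (mmul (mmul Q0 L0) (mtr Q0)) /\
  mdist (mmul (mmul Q0 Lo) (mtr Q0)) (mmul (mmul Q0 L0) (mtr Q0)) = dl.
Proof.
move=> Hpsi HQc HLc Hdl.
set Sl := mmul (mmul Q0 Lo) (mtr Q0); set Y := mmul (mmul Q0 L0) (mtr Q0).
have HSc : mat_cv (fun k => Sk (psi k).+1) Sl := iterates_subseq_cv HQc.
have HYc : mat_cv (fun k => Shalf (psi k)) Y := halves_subseq_cv HQc HLc.
have Hec : Un_cv (fun k => e (psi k)) (mdist Sl Y) := mdist_cv HSc HYc.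
have le_dl : mdist Sl Y <= dl.
  exact: Rle_cv_lim (fun k => eig_step (psi k)) Hec (cv_subseq Hpsi Hdl).
have dl_le : forall Z, C Z -> dl <= mdist Sl Z.
  move=> Z HZ; apply: (Rle_cv_lim _ (cv_const dl)
    (mdist_cv HSc (fun i j => cv_const (Z i j)))) => k.
  apply: Rle_trans (decreasing_ineq _ _ dist_decreasing Hdl _) _.
  exact: (proj2 (Hhalf _) Z HZ).
have CY : C Y := HCclosed _ _ (fun k => proj1 (Hhalf (psi k))) HYc.
have := dl_le Y CY; split; last lra.
split=> // Z HZ; have := dl_le Z HZ; lra.
Qed.

Lemma apm_fixed_point_limit :
  exists Sl Pl : Mat N,
    mat_limit_point Sk Sl /\
    is_proj C Sl Pl /\
    in_PM Lo Pl Sl /\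
    Un_cv (fun k => mdist (Sk k) (Shalf k)) (mdist Sl Pl) /\
    (mdist Sl Pl = 0 -> C Sl /\ Mset Lo Sl).
Proof.
have [dl Hdl] := dist_cv.
have [psi [Q0 [L0 [Hpsi [HQc HLc]]]]] := eig_subseq.
have [Hproj Hdist] := subseq_limit_proj Hpsi HQc HLc Hdl.
have HQ0 : is_orthogonal Q0 := orthogonal_limit (fun k => HQo (psi k)) HQc.
exists (mmul (mmul Q0 Lo) (mtr Q0)), (mmul (mmul Q0 L0) (mtr Q0)).
split; last split; last split; last split.
- exists (fun k => (psi k).+1); split; last exact: iterates_subseq_cv.
  by move=> k; rewrite ltnS; exact: Hpsi.
- exact: Hproj.
- exists Q0, L0; split; first exact: HQ0.
  split; first exact: (diagonal_limit (fun k => HLd (psi k)) HLc).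
  by split; first exact: (nonincreasing_limit (fun k => HLn (psi k)) HLc).
- by rewrite Hdist.
- move=> /mdist0_eq Heq; rewrite Heq; split; first exact: (proj1 Hproj).
  by rewrite -Heq; exists Q0.
Qed.

End AlternatingProjections.

Theorem theorem2 (N : nat) (C : Mat N -> Prop) (Lo : Mat N)
  (Sk Shalf : nat -> Mat N)
  (HCsym : forall X, C X -> is_symmetric X)
  (HCclosed : mat_closed C)
  (HCproj : forall X : Mat N, exists! P, is_proj C X P)
  (HLo_diag : is_diagonal Lo) (HLo_noninc : nonincreasing Lo)
  (HS0 : Mset Lo (Sk 0%nat))
  (Hhalf : forall k, is_proj C (Sk k) (Shalf k))
  (Hnext : forall k, in_PM Lo (Shalf k) (Sk (Datatypes.S k))) :
  exists Sl Pl : Mat N,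
    mat_limit_point Sk Sl /\
    is_proj C Sl Pl /\
    in_PM Lo Pl Sl /\
    Un_cv (fun k => mdist (Sk k) (Shalf k)) (mdist Sl Pl) /\
    (mdist Sl Pl = 0 -> C Sl /\ Mset Lo Sl).
Proof.
(* fix one eigendecomposition S_{k+1/2} = Q_k L_k Q_k^T per step *)
pose eig k (QL : Mat N * Mat N) :=
  is_orthogonal QL.1 /\ is_diagonal QL.2 /\ nonincreasing QL.2 /\
  Shalf k = mmul (mmul QL.1 QL.2) (mtr QL.1) /\ Sk k.+1 = mmul (mmul QL.1 Lo) (mtr QL.1).
have [QL HQL] : exists QL, forall k, eig k (QL k).
  apply: (ClassicalEpsilon.choice eig) => k.
  by have [Q [L HQL]] := Hnext k; exists (Q, L).
apply: (@apm_fixed_point_limit N C Lo Sk Shalf (fun k => (QL k).1) (fun k => (QL k).2))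
  => // k; by case: (HQL k) => [? [? [? [? ?]]]].
Qed.
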